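(* Let $p\geq 3$ and $0\leq a,d\leq p-1$ be integers, let $m\geq 3$, and let $A$ be an $m$-rowed simple $(0,1,2)$-matrix with $F(a,p,p,d)\not\prec A$. Fix any choice of associated vectors for the pairs of rows of $A$ (as described in the context), and let $B$ and $T$ be the corresponding matrix of unmarked columns and directed graph. If $|B|>2^m+m2^{m-1}-2^{m-3}$, then $T$ is transitive, i.e. whenever $i\to j$ and $j\to k$ are edges of $T$ for distinct $i,j,k$, then $i\to k$ is also an edge of $T$.
   Context: A simple matrix has no repeated columns; $|A|$ is the number of columns. $F\prec A$ means some submatrix of $A$ is a row/column permutation of $F$. $F(a,b,c,d)$ is the 2-rowed $(0,1)$-matrix with $a$ columns $\binom00$, $b$ columns $\binom10$, $c$ columns $\binom01$, $d$ columns $\binom11$. Associated vectors: to each pair $1\leq i<j\leq m$ one associates a vector $\binom{x}{y}\in\{\binom00,\binom01,\binom10,\binom11\}$ such that: if $\binom xy\in\{\binom01,\binom10\}$, there are at most $p-1$ columns $v$ of $A$ with $(v_i,v_j)=(x,y)$; if $\binom xy=\binom00$, at most $a-1$ such columns; if $\binom xy=\binom11$, at most $d-1$ such columns (such a vector exists since $F(a,p,p,d)\not\prec A$; if several are possible one is chosen arbitrarily). A column $v$ has a mark at $(i,j)$ if $(v_i,v_j)$ equals the vector associated with $(i,j)$. $B$ is the submatrix of columns of $A$ with no mark. $T$ is the directed graph on $[m]$ which, for each $i<j$, has the edge $i\to j$ if $\binom01$ is associated with $(i,j)$, the edge $j\to i$ if $\binom10$ is associated with $(i,j)$, and no edge between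 $i,j$ otherwise. *)

From mathcomp Require Import all_boot all_order all_algebra.
Set Implicit Arguments. Unset Strict Implicit. Unset Printing Implicit Defensive.

Definition is012 (m n : nat) (A : 'M[nat]_(m, n)) : Prop :=
  forall i j, A i j < 3.

Definition simple_mx (m n : nat) (A : 'M[nat]_(m, n)) : Prop :=
  injective (fun j : 'I_n => col j A).

(* F(a,b,c,d): 2 rows; a columns (0,0)^T, b columns (1,0)^T,
   c columns (0,1)^T, d columns (1,1)^T (row 0 is the top row). *)
Definition Fmx (a b c d : nat) : 'M[nat]_(2, a + b + c + d) :=
  \matrix_(i < 2, j < a + b + c + d)
    (if val j < a then 0
     else if val j < a + b then (if val i == 0 then 1 else 0)
     else if val j < a + b + c then (if val i == 0 then 0 else 1)
     else 1).

(* F ≺ A: some submatrix of A is a row/column permutation of F, i.e. there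
   are injective choices of rows and columns of A realising F. *)
Definition configuration (k l m n : nat) (F : 'M[nat]_(k, l)) (A : 'M[nat]_(m, n)) : Prop :=
  exists (r : 'I_k -> 'I_m) (c : 'I_l -> 'I_n),
    injective r /\ injective c /\ forall i j, A (r i) (c j) = F i j.

Definition paircount (m n : nat) (A : 'M[nat]_(m, n)) (i j : 'I_m) (x y : bool) : nat :=
  #|[set v : 'I_n | (A i v == nat_of_bool x) && (A j v == nat_of_bool y)]|.

(* assoc i j (for i < j) is the associated vector (x,y), true = 1. *)
Definition valid_assoc (a p d m n : nat) (A : 'M[nat]_(m, n))
    (assoc : 'I_m -> 'I_m -> bool * bool) : Prop :=
  forall i j : 'I_m, i < j ->
    let xy := assoc i j in
    paircount A i j xy.1 xy.2 <
      (if xy.1 != xy.2 then p else if xy.1 then d else a).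

Definition has_mark (m n : nat) (A : 'M[nat]_(m, n))
    (assoc : 'I_m -> 'I_m -> bool * bool) (v : 'I_n) (i j : 'I_m) : bool :=
  (A i v == nat_of_bool (assoc i j).1) && (A j v == nat_of_bool (assoc i j).2).

Definition Bcols (m n : nat) (A : 'M[nat]_(m, n))
    (assoc : 'I_m -> 'I_m -> bool * bool) : {set 'I_n} :=
  [set v : 'I_n | [forall i : 'I_m, forall j : 'I_m, (i < j) ==> ~~ has_mark A assoc v i j]].

Definition Tedge (m : nat) (assoc : 'I_m -> 'I_m -> bool * bool) (u w : 'I_m) : bool :=
  ((u < w) && (assoc u w == (false, true))) || ((w < u) && (assoc w u == (true, false))).

From mathcomp Require Import all_boot all_order all_algebra zify.
Set Implicit Arguments. Unset Strict Implicit. Unset Printing Implicit Defensive.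

(* Read a column of B as a function f from the rows to {0, 1, 2}: having no
   mark says that for all rows u <> w the pair (f u, f w) differs from the
   associated vector of {u, w}, read in the order (u, w).  Let Z(R) be the set
   of such functions on a set R of rows.  Deleting a row r, a function on
   R \ r has at most two admissible values at r unless both 0 and 1 are
   admissible; in that case its value at every other row w is forced to avoid
   one bit, so it is determined by the set of rows where it takes the value 2.
   Hence |Z(R)| <= 2 |Z(R \ r)| + 2^(|R|-1).  If i -> j -> k but not i -> k,
   the 27 triples of values on {i, j, k} leave at most 19 admissible ones, and
   the recursion started there gives |B| <= |Z([m])| <= 2^m + m 2^(m-1) - 2^(m-3). *)

Definition matches (x y : 'I_3) (c : bool * bool) : bool :=
  (x == c.1 :> nat) && (y == c.2 :> nat).

Definition path_triples (c : bool * bool) : {set 'I_3 * 'I_3 * 'I_3} :=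
  [set t | [&& ~~ matches t.1.1 t.1.2 (false, true),
               ~~ matches t.1.2 t.2 (false, true) & ~~ matches t.1.1 t.2 c]].

(* This is where non-transitivity enters: for [c = (false, true)] there are 20. *)
Lemma card_path_triples c : c != (false, true) -> #|path_triples c| <= 19.
Proof.
rewrite -sum1_card big_mkcond /=.
have -> : \sum_t (if t \in path_triples c then 1 else 0) =
    \sum_x \sum_y \sum_z (if (x, y, z) \in path_triples c then 1 else 0).
  by rewrite !pair_bigA; apply: eq_bigr => -[[]].
rewrite !big_ord_recr !big_ord0 /=.
by case: c => -[] []; rewrite !inE.
Qed.

Definition avoid_bound (n : nat) : nat := 2 ^ n + n * 2 ^ (n - 1) - 2 ^ (n - 3).

Lemma avoid_boundS n : 3 <= n -> avoid_bound n.+1 = 2 * avoid_bound n + 2 ^ n.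
Proof.
move=> /subnKC <-; rewrite /avoid_bound; set k := n - 3.
have -> : (3 + k).+1 - 1 = 3 + k by lia.
have -> : (3 + k).+1 - 3 = k.+1 by lia.
have -> : 3 + k - 1 = 2 + k by lia.
have -> : 3 + k - 3 = k by lia.
rewrite !expnS; nia.
Qed.

Section PatternAvoidance.

Variables (T : finType) (F : T -> T -> bool * bool).
Implicit Types (R : {set T}) (r w : T) (f g : {ffun T -> 'I_3}) (x : 'I_3).

(* Functions are normalised to [0] outside [R], so that [avoiders R] is in
   bijection with the admissible functions on [R]. *)
Definition avoids (R : {set T}) (f : {ffun T -> 'I_3}) : bool :=
  [forall u in R, forall w in R, (u != w) ==> ~~ matches (f u) (f w) (F u w)]
  && [forall u in ~: R, f u == ord0].

Definition avoiders (R : {set T}) : {set {ffun T -> 'I_3}} := [set f | avoids R f].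

Lemma avoidsP R f :
  reflect ((forall u w, u \in R -> w \in R -> u != w -> ~~ matches (f u) (f w) (F u w))
           /\ (forall u, u \notin R -> f u = ord0))
          (avoids R f).
Proof.
apply: (iffP andP) => [[/forall_inP avR /forall_inP out0] | [avR out0]]; split.
- by move=> u w uR wR; move/forall_inP/(_ w wR)/implyP: (avR u uR).
- by move=> u uR; apply/eqP/out0; rewrite inE.
- by apply/forall_inP=> u uR; apply/forall_inP=> w wR; apply/implyP; apply: avR.
- by apply/forall_inP=> u; rewrite inE => /out0 ->.
Qed.

Definition upd (f : {ffun T -> 'I_3}) (r : T) (x : 'I_3) : {ffun T -> 'I_3} :=
  [ffun u => if u == r then x else f u].

Lemma upd_updK f r x y : upd (upd f r x) r y = upd f r y.
Proof. by apply/ffunP=> u; rewrite !ffunE; case: eqP. Qed.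

Lemma upd_id f r : upd f r (f r) = f.
Proof. by apply/ffunP=> u; rewrite ffunE; case: eqP => [->|]. Qed.

Lemma avoids_upd0 R r f : avoids R f -> avoids (R :\ r) (upd f r ord0).
Proof.
move/avoidsP=> [avR out0]; apply/avoidsP; split.
- move=> u w /setD1P[ur uR] /setD1P[wr wR] uw.
  by rewrite !ffunE (negbTE ur) (negbTE wr); apply: avR.
- move=> u; rewrite ffunE in_setD1 negb_and negbK.
  by case: eqP => //= _; apply: out0.
Qed.

Definition extensions (R : {set T}) (r : T) (g : {ffun T -> 'I_3}) : {set 'I_3} :=
  [set x | upd g r x \in avoiders R].

Definition binary_extendable (R : {set T}) (r : T) (g : {ffun T -> 'I_3}) : bool :=
  (ord0 \in extensions R r g) && (inord 1 \in extensions R r g).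

Lemma card_avoiders_sum R r :
  #|avoiders R| <= \sum_(g in avoiders (R :\ r)) #|extensions R r g|.
Proof.
rewrite -sum1_card (partition_big (fun f => upd f r ord0) (mem (avoiders (R :\ r)))) => [|f];
  last by rewrite !inE; apply: avoids_upd0.
apply: leq_sum => g _; rewrite sum1dep_card.
apply: leq_trans (leq_imset_card (upd g r) (extensions R r g)).
apply/subset_leq_card/subsetP => f.
rewrite !inE => /andP[fR /eqP <-].
by apply/imsetP; exists (f r); rewrite ?inE upd_updK upd_id.
Qed.

Lemma card_extensions R r g :
  #|extensions R r g| <= 2 + binary_extendable R r g.
Proof.
have notin_le2 x : x \notin extensions R r g -> #|extensions R r g| <= 2.
  move=> xN; apply: (@leq_trans #|[set~ x]|); last by rewrite cardsC1 card_ord.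
  apply/subset_leq_card/subsetP => y yE.
  by rewrite !inE; apply: contraNneq xN => <-.
rewrite /binary_extendable; case: (ord0 \in _) / boolP => [_|/notin_le2]; last by lia.
case: (inord 1 \in _) / boolP => [_|/notin_le2]; last by lia.
by apply: leq_trans (max_card _) _; rewrite card_ord.
Qed.

Lemma binary_extendable_neq R r g w :
  r \in R -> w \in R :\ r -> binary_extendable R r g -> val (g w) != (F w r).1.
Proof.
move=> rR /setD1P[wr wR] /andP[]; rewrite !inE => /avoidsP[av0 _] /avoidsP[av1 _].
have := av0 w r wR rR wr; have := av1 w r wR rR wr.
rewrite /matches !ffunE (negbTE wr) eqxx inordK //.
by case: (F w r) => a [] /=; rewrite ?andbT ?andbF.
Qed.

Lemma card_binary_extendable R r : r \in R ->
  #|[set g in avoiders (R :\ r) | binary_extendable R r g]| <= 2 ^ #|R :\ r|.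
Proof.
move=> rR; set D := [set g in _ | _].
pose binary_part g := [set w in R :\ r | g w < 2].
(* At [w \in R :\ r] a value [< 2] of [g \in D] must be the bit [~~ (F w r).1]. *)
have binary_part_inj : {in D &, injective binary_part}.
  move=> g1 g2; rewrite !inE => /andP[/avoidsP[_ out1] ext1] /andP[/avoidsP[_ out2] ext2].
  move=> /setP eq12; apply/ffunP => w; have [wR|wN] := boolP (w \in R :\ r); last first.
    by rewrite out1 ?out2.
  have := binary_extendable_neq rR wR ext1; have := binary_extendable_neq rR wR ext2.
  have := eq12 w; rewrite !inE -in_setD1 wR /=.
  have := ltn_ord (g1 w); have := ltn_ord (g2 w).
  by case: (F w r).1 => /= *; apply: ord_inj; lia.
rewrite -(card_powerset (R :\ r)) -(card_in_imset binary_part_inj).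
apply/subset_leq_card/subsetP => _ /imsetP[g _ ->].
by rewrite powersetE; apply/subsetP => w /setIdP[].
Qed.

Lemma card_avoiders_rec R r : r \in R ->
  #|avoiders R| <= 2 * #|avoiders (R :\ r)| + 2 ^ #|R :\ r|.
Proof.
move=> rR; apply: leq_trans (card_avoiders_sum R r) _.
apply: (@leq_trans (\sum_(g in avoiders (R :\ r)) (2 + binary_extendable R r g))).
  by apply: leq_sum => g _; apply: card_extensions.
rewrite big_split /= sum_nat_const mulnC leq_add2l.
by rewrite -big_mkcondr sum1dep_card card_binary_extendable.
Qed.

Section NonTransitivePath.

Variables i j k : T.
Hypotheses (ij : i != j) (jk : j != k) (ik : i != k).
Hypotheses (Fij : F i j = (false, true)) (Fjk : F j k = (false, true)).
Hypothesis Fik : F i k != (false, true).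

Lemma card_avoiders_path : #|avoiders [set i; j; k]| <= 19.
Proof.
pose triple f := (f i, f j, f k).
have triple_inj : {in avoiders [set i; j; k] &, injective triple}.
  move=> f1 f2; rewrite !inE => /avoidsP[_ out1] /avoidsP[_ out2] [e1 e2 e3].
  apply/ffunP => w; have [|wN] := boolP (w \in [set i; j; k]); last by rewrite out1 ?out2.
  by rewrite !inE -orbA => /or3P[] /eqP->.
rewrite -(card_in_imset triple_inj); apply: leq_trans (card_path_triples Fik).
apply/subset_leq_card/subsetP => _ /imsetP[f + ->]; rewrite !inE => /avoidsP[avf _].
have := avf i j; have := avf j k; have := avf i k; rewrite Fij Fjk !inE !eqxx ?orbT.
by move=> /(_ isT isT ik) -> /(_ isT isT jk) -> /(_ isT isT ij) ->.
Qed.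

Lemma card_avoiders_le R : [set i; j; k] \subset R -> #|avoiders R| <= avoid_bound #|R|.
Proof.
have card_ijk : #|[set i; j; k]| = 3.
  by rewrite setUC !cardsU1 cards1 !inE negb_or ![k == _]eq_sym ij ik jk.
have [n] := ubnP #|R|; elim: n R => // n IH R ltRn ijkR.
have [Rijk | /subsetPn[r rR rN]] := boolP (R \subset [set i; j; k]).
  have -> : R = [set i; j; k] by apply/eqP; rewrite eqEsubset Rijk.
  by rewrite card_ijk; apply: card_avoiders_path.
have ijkR' : [set i; j; k] \subset R :\ r.
  apply/subsetP => w wijk; rewrite in_setD1 (subsetP ijkR) // andbT.
  by apply: contraNneq rN => <-.
have cardR : #|R| = (#|R :\ r|).+1 by rewrite (cardsD1 r) rR.
have ge3 : 3 <= #|R :\ r| by rewrite -card_ijk subset_leq_card.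
rewrite cardR avoid_boundS //; apply: leq_trans (card_avoiders_rec rR) _.
by rewrite leq_add2r leq_mul2l IH // -ltnS -cardR.
Qed.

End NonTransitivePath.

End PatternAvoidance.

Section UnmarkedColumns.

Variables (m n : nat) (A : 'M[nat]_(m, n)) (assoc : 'I_m -> 'I_m -> bool * bool).
Hypothesis A012 : is012 A.

(* [assoc u w] is only consulted for [u < w]; this is the associated vector of
   [{u, w}] read in the order [(u, w)]. *)
Definition oriented_assoc (u w : 'I_m) : bool * bool :=
  if u < w then assoc u w else ((assoc w u).2, (assoc w u).1).

Lemma Tedge_oriented_assoc u w :
  u != w -> Tedge assoc u w = (oriented_assoc u w == (false, true)).
Proof.
move=> uw; rewrite /Tedge /oriented_assoc.
case: ltngtP => [_|_|/ord_inj eq_uw] /=; last by rewrite eq_uw eqxx in uw.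
  by rewrite orbF.
by case: (assoc w u) => [[] []].
Qed.

Definition col_fun (v : 'I_n) : {ffun 'I_m -> 'I_3} := [ffun u => inord (A u v)].

Lemma col_funE v u : col_fun v u = A u v :> nat.
Proof. by rewrite ffunE inordK //; apply: A012. Qed.

Lemma col_fun_inj : simple_mx A -> injective col_fun.
Proof.
move=> Asimple v1 v2 eq12; apply: Asimple; apply/matrixP => u z.
by rewrite !mxE -!col_funE eq12.
Qed.

Lemma col_fun_Bcols v :
  v \in Bcols A assoc -> col_fun v \in avoiders oriented_assoc [set: 'I_m].
Proof.
rewrite !inE => /forallP unmarked; apply/avoidsP; split=> [u w _ _ uw|u]; last by rewrite inE.
rewrite /matches !col_funE /oriented_assoc.
case: ltngtP => [uw'|wu|/ord_inj eq_uw]; last by rewrite eq_uw eqxx in uw.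
  by move/forallP/(_ w)/implyP/(_ uw'): (unmarked u).
by move/forallP/(_ u)/implyP/(_ wu): (unmarked w); rewrite /has_mark andbC.
Qed.

Lemma card_Bcols_le : simple_mx A ->
  #|Bcols A assoc| <= #|avoiders oriented_assoc [set: 'I_m]|.
Proof.
move=> Asimple; rewrite -(card_imset _ (col_fun_inj Asimple)).
by apply/subset_leq_card/subsetP => _ /imsetP[v vB ->]; apply: col_fun_Bcols.
Qed.

End UnmarkedColumns.

Theorem mainTheorem7 (p a d m n : nat) (A : 'M[nat]_(m, n))
    (assoc : 'I_m -> 'I_m -> bool * bool) :
  3 <= p -> a <= p - 1 -> d <= p - 1 -> 3 <= m ->
  is012 A -> simple_mx A ->
  ~ configuration (Fmx a p p d) A ->
  valid_assoc a p d A assoc ->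
  2 ^ m + m * 2 ^ (m - 1) - 2 ^ (m - 3) < #|Bcols A assoc| ->
  forall i j k : 'I_m, i != j -> j != k -> i != k ->
    Tedge assoc i j -> Tedge assoc j k -> Tedge assoc i k.
Proof.
(* Avoiding F(a,p,p,d) only guarantees that associated vectors exist; the
   bound holds for any choice of them. *)
move=> _ _ _ _ A012 Asimple _ _ bigB i j k ij jk ik.
rewrite !Tedge_oriented_assoc // => /eqP Tij /eqP Tjk; apply: contraTT bigB => Tik.
rewrite -leqNgt; apply: leq_trans (card_Bcols_le assoc A012 Asimple) _.
have := card_avoiders_le ij jk ik Tij Tjk Tik (subsetT _).
by rewrite cardsT card_ord.
Qed.
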